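(* Let $\{G^i\}_{i\in I}$, $G^i=(V,\{S^i_v\}_{v\in V},\{u^i_v\}_{v\in V})$, be a finite family of games over the same graph $\Gamma=(V,E)$. If $\langle\langle s^i_v\rangle_{i\in I}\rangle_{v\in V}\in NE(\prod_{i\in I}G^i)$, then $\langle s^{i_0}_v\rangle_{v\in V}\in NE(G^{i_0})$ for each $i_0\in I$.
   Context: A game over a finite simple undirected graph $\Gamma=(V,E)$ is a strategic game with player set $V$, finite strategy sets, and real pay-off functions $u_v$ depending only on the strategies of $v$ and its neighbours. $NE(G)$ is the set of pure Nash equilibria. The product $\prod_{i\in I}G^i$ is the game with player set $V$, strategy sets $S_v=\prod_{i\in I}S^i_v$, and pay-offs $u_v=\sum_{i\in I}u^i_v$ (where $u^i_v$ is evaluated at the $i$-th components of the profile); a profile of the product is written $\langle\langle s^i_v\rangle_{i\in I}\rangle_{v\in V}$. *)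

From mathcomp Require Import all_boot all_order all_algebra.
Set Implicit Arguments. Unset Strict Implicit. Unset Printing Implicit Defensive.
Import Order.TTheory GRing.Theory Num.Theory.
Local Open Scope ring_scope.

Definition simple_graph (V : finType) (adj : rel V) : Prop :=
  symmetric adj /\ irreflexive adj.

Definition local_payoffs (R : realFieldType) (V : finType) (adj : rel V)
    (S : V -> finType) (u : forall v : V, (forall w : V, S w) -> R) : Prop :=
  forall (v : V) (s t : forall w : V, S w),
    (forall w : V, (w == v) || adj v w -> s w = t w) -> u v s = u v t.

Definition is_NE (R : realFieldType) (V : finType) (S : V -> Type)
    (u : forall v : V, (forall w : V, S w) -> R) (s : forall w : V, S w) : Prop :=
  forall (v : V) (t : forall w : V, S w),
    (forall w : V, w != v -> t w = s w) -> u v t <= u v s.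

Definition prod_strat (I V : finType) (S : I -> V -> finType) (v : V) : finType :=
  {dffun forall i : I, S i v}.

Definition prod_payoff (R : realFieldType) (I V : finType) (S : I -> V -> finType)
    (u : forall (i : I) (v : V), (forall w : V, S i w) -> R)
    (v : V) (s : forall w : V, prod_strat S w) : R :=
  \sum_(i : I) u i v (fun w => s w i).

From mathcomp Require Import all_boot all_order all_algebra.
From Stdlib Require Import FunctionalExtensionality.
Set Implicit Arguments. Unset Strict Implicit. Unset Printing Implicit Defensive.
Import Order.TTheory GRing.Theory Num.Theory.
Local Open Scope ring_scope.

(* A deviation t of player v in the component game i0 lifts to the deviation of
   v in the product game that replaces only the i0-th coordinate of s by t.
   The product payoffs of the two profiles differ exactly by the change in the
   i0-th summand, so a profitable deviation in G^i0 would be profitable in the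
   product. *)

Section ProductGame.

Variables (V I : finType) (S : I -> V -> finType).

Definition replace_component (s : forall w : V, prod_strat S w) (i0 : I)
    (t : forall w : V, S i0 w) : forall w : V, prod_strat S w :=
  fun w => [ffun i => dfwith (fun j => s w j) (t w) i].

Variables (s : forall w : V, prod_strat S w) (i0 : I) (t : forall w : V, S i0 w).

Lemma replace_component_in : (fun w => replace_component s t w i0) = t.
Proof.
by apply: functional_extensionality_dep => w; rewrite ffunE dfwith_in.
Qed.

Lemma replace_component_out i :
  i0 != i -> (fun w => replace_component s t w i) = (fun w => s w i).
Proof.
by move=> ne; apply: functional_extensionality_dep => w; rewrite ffunE dfwith_out.
Qed.

Lemma replace_component_unilateral v :
  (forall w, w != v -> t w = s w i0) ->
  forall w, w != v -> replace_component s t w = s w.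
Proof.
move=> tv w wv; apply/ffunP => i; rewrite ffunE.
by case: dfwithP => //; rewrite tv.
Qed.

Lemma prod_payoff_replace_component (R : realFieldType)
    (u : forall (i : I) (v : V), (forall w : V, S i w) -> R) (v : V) :
  prod_payoff u v (replace_component s t) - prod_payoff u v s =
  u i0 v t - u i0 v (fun w => s w i0).
Proof.
rewrite /prod_payoff (bigD1 i0) //= [X in _ - X](bigD1 i0) //= replace_component_in.
rewrite (eq_bigr (fun i => u i v (fun w => s w i))).
  by rewrite opprD addrACA subrr addr0.
by move=> i ne; rewrite replace_component_out // eq_sym.
Qed.

End ProductGame.

Lemma is_NE_prod_component (R : realFieldType) (V I : finType)
    (S : I -> V -> finType) (u : forall (i : I) (v : V), (forall w : V, S i w) -> R)
    (s : forall v : V, prod_strat S v) (i0 : I) :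
  is_NE (prod_payoff u) s -> is_NE (u i0) (fun v => s v i0).
Proof.
move=> NEs v t tv.
have := NEs v (replace_component s t).
rewrite -subr_le0 prod_payoff_replace_component subr_le0; apply.
exact: replace_component_unilateral.
Qed.

Theorem lemma17 (R : realFieldType) (V : finType) (adj : rel V)
    (I : finType) (S : I -> V -> finType)
    (u : forall (i : I) (v : V), (forall w : V, S i w) -> R) :
  simple_graph adj ->
  (forall i : I, local_payoffs adj (u i)) ->
  forall s : forall v : V, prod_strat S v,
    is_NE (prod_payoff u) s ->
    forall i0 : I, is_NE (u i0) (fun v => s v i0).
Proof. by move=> _ _ s NEs i0; exact: is_NE_prod_component. Qed.
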